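(* In the construction described in the context, for every $i\in\{1,\dots,t-1\}$ there exists a vertex $v_i\in V_{cc}$ with $v_i\in X_i$ and $v_i\notin X_j$ for all $j<i$. Moreover, there exists a vertex $u\in V_{cc}$ with $u\notin X_j$ for all $j\in\{1,\dots,t-1\}$.
   Context: Setting: $G=(V,E)$ is a connected finite undirected graph (parallel edges allowed), $w:E\to\mathbb{R}_{\ge0}$ edge weights, $c:E\to\mathbb{R}_{>0}$ edge costs, $n=|V|$. For $S\subseteq V$, $C_G(S)=\{e\in E:|e\cap S|=1\}$ (complete cut; its edges cross it) and $C_G(S,W)=\{e\in C_G(S):w(e)<W\}$ (partial cut). $F\subseteq E$ is a set with $G'=G\setminus F=(V,E\setminus F)$ connected; $B=c(F)$ and $\Delta=\mathrm{MST}(G')-\mathrm{MST}(G)$ (MST weights w.r.t. $w$). Construction: let $T$ be a minimum spanning tree of $G$ and $T\cap F=\{e_1,\dots,e_{t-1}\}$, with $t\ge2$. Removing these edges splits $T$ into components with vertex sets $A_1,\dots,A_t$ (a partition of $V$). Let $G'_{cc}$ be the multigraph with vertex set $V_{cc}=\{A_1,\dots,A_t\}$ having, for every edge $\{u,v\}\in E\setminus F$ with $u\in A_i$, $v\in A_j$, an edge between $A_i$ and $A_j$ of weight $w(\{u,v\})$ (identified with the original edge). Let $T'_{cc}$ be a minimum spanning tree of $G'_{cc}$, with edges $e'_1,\dots,e'_{t-1}$ indexed so that $w(e'_1)\le\dots\le w(e'_{t-1})$ (ties broken arbitrarily). For each $i$, deleting $e'_i,e'_{i+1},\dots,e'_{t-1}$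 from $T'_{cc}$ leaves a forest in which $e'_i$ joins two components $L_i,R_i\subseteq V_{cc}$. Counters $k(A)=0$ for all $A\in V_{cc}$ initially, and $k(S)=\max_{A\in S}k(A)$. For $i=1,\dots,t-1$ in order: set $X_i=L_i$ if $k(L_i)\le k(R_i)$, else $X_i=R_i$; then increase $k(A)$ by $1$ for every $A\in X_i$. Identifying a set of vertices of $G'_{cc}$ with the union of the corresponding vertex sets in $V$, define $C_i=C_G(X_i,w(e'_i))$. *)

From mathcomp Require Import all_boot all_order all_algebra.
Set Implicit Arguments. Unset Strict Implicit. Unset Printing Implicit Defensive.
Import Order.TTheory GRing.Theory Num.Theory.

Definition adj (U E : finType) (ends : E -> U * U) (S : {set E}) : rel U :=
  fun x y => [exists e in S, (ends e == (x, y)) || (ends e == (y, x))].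

Definition connected_on (U E : finType) (ends : E -> U * U)
    (D : {set U}) (S : {set E}) : Prop :=
  forall x y, x \in D -> y \in D -> connect (adj ends S) x y.

(* S is a spanning tree of the multigraph (D, E0): S is a subset of E0 with
   endpoints in D, (D,S) is connected, and (D,S) is acyclic (every edge of S
   is a bridge of S, i.e. its endpoints are disconnected in S minus it). *)
Definition is_spanning_tree (U E : finType) (ends : E -> U * U)
    (D : {set U}) (E0 S : {set E}) : Prop :=
  [/\ S \subset E0,
      (forall e, e \in S -> (ends e).1 \in D /\ (ends e).2 \in D),
      connected_on ends D S &
      forall e, e \in S -> ~~ connect (adj ends (S :\ e)) (ends e).1 (ends e).2].

Definition is_MST (R : realFieldType) (U E : finType) (ends : E -> U * U)
    (w : E -> R) (D : {set U}) (E0 S : {set E}) : Prop :=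
  is_spanning_tree ends D E0 S /\
  forall S', is_spanning_tree ends D E0 S' ->
    (\sum_(e in S) w e <= \sum_(e in S') w e)%R.

Section Construction.
Variables (V E : finType) (ends : E -> V * V) (T F : {set E}).

Definition comp (x : V) : {set V} := [set y | connect (adj ends (T :\: F)) x y].

Definition Vcc : {set {set V}} := [set comp x | x : V].

(* Endpoints of an edge of G'_cc (the edge {u,v} joins comp u and comp v). *)
Definition ends_cc (e : E) : {set V} * {set V} :=
  (comp (ends e).1, comp (ends e).2).

Definition comp_cc (pre : seq E) (A : {set V}) : {set {set V}} :=
  [set B in Vcc | connect (adj ends_cc [set x in pre]) A B].

Definition kmax (k : {set V} -> nat) (S : {set {set V}}) : nat :=
  \max_(A in S) k A.

(* Processing e'_i with counters k, the already processed edges being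
   pre = [e'_1; ...; e'_{i-1}]: L_i, R_i are the components of the forest
   (e'_1..e'_{i-1}) containing the two ends of e'_i; the list of the X_i. *)
Fixpoint run (k : {set V} -> nat) (pre rest : seq E) : seq {set {set V}} :=
  match rest with
  | [::] => [::]
  | e :: rest' =>
      let L := comp_cc pre (ends_cc e).1 in
      let Rr := comp_cc pre (ends_cc e).2 in
      let X := if kmax k L <= kmax k Rr then L else Rr in
      X :: run (fun A => k A + (A \in X)) (rcons pre e) rest'
  end.

(* Xs s = [X_1; ...; X_{t-1}] for s = [e'_1; ...; e'_{t-1}]. *)
Definition Xs (s : seq E) : seq {set {set V}} := run (fun _ => 0) [::] s.

End Construction.

From mathcomp Require Import all_boot all_order all_algebra.
Import Order.TTheory GRing.Theory Num.Theory.

Set Implicit Arguments.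
Unset Strict Implicit.
Unset Printing Implicit Defensive.

(* Invariant of the counting process: every component of the forest built so
   far contains a vertex whose counter is still 0.  Processing e'_i merges two
   distinct components L_i and R_i (T'_cc is acyclic); only one of them, X_i,
   is incremented, so the zero vertex of the other one survives in the merged
   component.  Since the counter of A is the number of j with A in X_j, a zero
   vertex of X_i lies in no earlier X_j, and at the end a zero vertex lies in
   no X_j at all. *)

Lemma adj_sym (U E : finType) (ends : E -> U * U) (S : {set E}) :
  symmetric (adj ends S).
Proof.
by move=> x y; apply/existsP/existsP => -[e /andP[eS exy]]; exists e; rewrite eS orbC.
Qed.

Lemma connect_adj_sym (U E : finType) (ends : E -> U * U) (S : {set E}) x y :
  connect (adj ends S) x y = connect (adj ends S) y x.
Proof. by rewrite (sym_connect_sym (adj_sym ends S)). Qed.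

Lemma connect_adj_subset (U E : finType) (ends : E -> U * U) (S S' : {set E}) x y :
  S \subset S' -> connect (adj ends S) x y -> connect (adj ends S') x y.
Proof.
move=> sSS'; apply: connect_sub => a b /existsP[e /andP[eS eab]].
by apply: connect1; apply/existsP; exists e; rewrite (subsetP sSS').
Qed.

Lemma bridge_disconnects_subset (U E : finType) (ends : E -> U * U)
    (S P : {set E}) e :
  ~~ connect (adj ends (S :\ e)) (ends e).1 (ends e).2 ->
  P \subset S -> e \notin P -> ~~ connect (adj ends P) (ends e).1 (ends e).2.
Proof.
move=> bridge sPS eP; apply: contra bridge; apply: connect_adj_subset.
by apply/subsetP => x xP; rewrite !inE (subsetP sPS) // andbT; apply: contraNneq eP => <-.
Qed.

Section Counting.
Variables (V E : finType) (ends : E -> V * V) (T F : {set E}).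
Notation cc := (ends_cc ends T F).
Notation VC := (Vcc ends T F).
Notation ccomp := (comp_cc ends T F).

Definition incr_on (X : {set {set V}}) (k : {set V} -> nat) (A : {set V}) : nat :=
  k A + (A \in X).

Definition chosen_side (k : {set V} -> nat) (pre : seq E) (e : E) : {set {set V}} :=
  let L := ccomp pre (cc e).1 in
  let R := ccomp pre (cc e).2 in
  if kmax k L <= kmax k R then L else R.

Lemma run_cons k pre e s :
  run ends T F k pre (e :: s) =
  chosen_side k pre e :: run ends T F (incr_on (chosen_side k pre e) k) (rcons pre e) s.
Proof. by []. Qed.

Lemma incr_on_eq0 X k A : (incr_on X k A == 0) = (k A == 0) && (A \notin X).
Proof. by rewrite /incr_on addn_eq0 eqb0. Qed.

Lemma mem_comp_cc pre A B :
  (B \in ccomp pre A) = (B \in VC) && connect (adj cc [set x in pre]) A B.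
Proof. by rewrite inE. Qed.

Lemma ends_cc1_Vcc e : (cc e).1 \in VC.
Proof. exact: imset_f. Qed.

Lemma ends_cc2_Vcc e : (cc e).2 \in VC.
Proof. exact: imset_f. Qed.

Definition zero_in_each_comp (k : {set V} -> nat) (pre : seq E) : Prop :=
  forall A, A \in VC -> exists2 B, B \in ccomp pre A & k B = 0.

Lemma zero_in_each_comp_merge k pre e L0 R0 :
  zero_in_each_comp k pre -> R0 \in VC ->
  adj cc [set x in rcons pre e] L0 R0 ->
  ~~ connect (adj cc [set x in pre]) L0 R0 ->
  zero_in_each_comp (incr_on (ccomp pre L0) k) (rcons pre e).
Proof.
move=> zk R0V eLR nLR A AV.
have grow x y : connect (adj cc [set x in pre]) x y ->
    connect (adj cc [set x in rcons pre e]) x y.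
  by apply: connect_adj_subset; apply/subsetP => x'; rewrite !inE mem_rcons inE orbC => ->.
have [B] := zk A AV; rewrite mem_comp_cc => /andP[BV AB] kB.
case BL: (B \in ccomp pre L0).
  have [C] := zk R0 R0V; rewrite mem_comp_cc => /andP[CV R0C] kC.
  have CL : C \notin ccomp pre L0.
    rewrite mem_comp_cc CV; apply: contra nLR => L0C.
    by apply: connect_trans L0C _; rewrite connect_adj_sym.
  exists C; last by rewrite /incr_on kC (negbTE CL).
  rewrite mem_comp_cc CV; apply: connect_trans (grow _ _ AB) _.
  move: BL; rewrite mem_comp_cc => /andP[_ L0B].
  apply: connect_trans (_ : connect _ B L0) _; first by rewrite connect_adj_sym grow.
  exact: connect_trans (connect1 eLR) (grow _ _ R0C).
exists B; last by rewrite /incr_on kB BL.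
by rewrite mem_comp_cc BV grow.
Qed.

Lemma chosen_side_has_zero k pre e :
  zero_in_each_comp k pre ->
  exists v, [/\ v \in VC, v \in chosen_side k pre e & k v = 0].
Proof.
move=> zk; have [Y YV ->] : exists2 Y, Y \in VC & chosen_side k pre e = ccomp pre Y.
  by rewrite /chosen_side; case: ifP => _; [exists (cc e).1 | exists (cc e).2];
    rewrite ?ends_cc1_Vcc ?ends_cc2_Vcc.
have [B BY kB] := zk Y YV; exists B; split=> //.
by move: BY; rewrite mem_comp_cc => /andP[].
Qed.

Variable Tcc : {set E}.
Hypothesis Tcc_acyclic :
  forall e, e \in Tcc -> ~~ connect (adj cc (Tcc :\ e)) (cc e).1 (cc e).2.

Lemma zero_in_each_comp_step k pre e s :
  zero_in_each_comp k pre -> uniq (pre ++ e :: s) -> {subset pre ++ e :: s <= Tcc} ->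
  zero_in_each_comp (incr_on (chosen_side k pre e) k) (rcons pre e).
Proof.
move=> zk uniq_pes sub_pes.
have nLR : ~~ connect (adj cc [set x in pre]) (cc e).1 (cc e).2.
  apply: (bridge_disconnects_subset (Tcc_acyclic _)).
  - by apply: sub_pes; rewrite mem_cat inE eqxx orbT.
  - by apply/subsetP => x; rewrite inE => xpre; apply: sub_pes; rewrite mem_cat xpre.
  - rewrite inE; move: uniq_pes; rewrite cat_uniq => /and3P[_ + _].
    by apply: contra => epre; apply/hasP; exists e; rewrite ?inE ?eqxx.
have eLR : adj cc [set x in rcons pre e] (cc e).1 (cc e).2.
  by apply/existsP; exists e; rewrite inE mem_rcons inE !eqxx.
rewrite /chosen_side; case: ifP => _.
  exact: zero_in_each_comp_merge zk (ends_cc2_Vcc e) eLR nLR.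
apply: zero_in_each_comp_merge zk (ends_cc1_Vcc e) _ _.
  by rewrite adj_sym.
by rewrite connect_adj_sym.
Qed.

Lemma run_first_entry s k pre :
  zero_in_each_comp k pre -> uniq (pre ++ s) -> {subset pre ++ s <= Tcc} ->
  forall i, i < size s -> exists v,
    [/\ v \in VC, v \in nth set0 (run ends T F k pre s) i, k v = 0 &
        forall j, j < i -> v \notin nth set0 (run ends T F k pre s) j].
Proof.
elim: s k pre => [//|e s IH] k pre zk uniq_pes sub_pes [_|i].
  by have [v [vV vX kv]] := chosen_side_has_zero e zk; exists v.
rewrite run_cons /= ltnS => ilt.
have zk' := zero_in_each_comp_step zk uniq_pes sub_pes.
rewrite -cat_rcons in uniq_pes sub_pes.
have [v [vV viX /eqP]] := IH _ _ zk' uniq_pes sub_pes i ilt.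
rewrite incr_on_eq0 => /andP[/eqP kv vX] vnot.
by exists v; split=> // -[|j] //; rewrite ltnS => /vnot.
Qed.

Lemma run_zero_avoids_all s k pre :
  zero_in_each_comp k pre -> uniq (pre ++ s) -> {subset pre ++ s <= Tcc} ->
  forall A, A \in VC -> exists u,
    [/\ u \in VC, k u = 0 & forall j, j < size s -> u \notin nth set0 (run ends T F k pre s) j].
Proof.
elim: s k pre => [|e s IH] k pre zk uniq_pes sub_pes A AV.
  by have [B] := zk A AV; rewrite mem_comp_cc => /andP[BV _] kB; exists B.
have zk' := zero_in_each_comp_step zk uniq_pes sub_pes.
rewrite -cat_rcons in uniq_pes sub_pes.
have [u [uV /eqP]] := IH _ _ zk' uniq_pes sub_pes A AV.
rewrite incr_on_eq0 => /andP[/eqP ku uX] unot.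
by exists u; split=> // -[|j] //; rewrite /= ltnS => /unot.
Qed.

End Counting.

Theorem mainTheorem11 (R : realFieldType) (V E : finType)
    (ends : E -> V * V) (w : E -> R) (F T Tcc : {set E}) (s : seq E) :
  (forall e, (ends e).1 != (ends e).2) ->
  (forall e, (0 <= w e)%R) ->
  connected_on ends [set: V] [set: E] ->
  connected_on ends [set: V] (~: F) ->
  is_MST ends w [set: V] [set: E] T ->
  T :&: F != set0 ->
  is_MST (ends_cc ends T F) w (Vcc ends T F) (~: F) Tcc ->
  uniq s -> [set e in s] = Tcc -> sorted (fun a b => (w a <= w b)%R) s ->
  (forall i, (i < size s)%N ->
     exists v, [/\ v \in Vcc ends T F, v \in nth set0 (Xs ends T F s) i &
                   forall j, (j < i)%N -> v \notin nth set0 (Xs ends T F s) j])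
  /\
  (exists u, u \in Vcc ends T F /\
     forall j, (j < size s)%N -> u \notin nth set0 (Xs ends T F s) j).
Proof.
move=> _ _ _ _ _ TF_neq0 [[_ _ _ Tcc_acyclic] _] uniq_s s_Tcc _.
have zero0 : zero_in_each_comp ends T F (fun _ => 0) [::].
  by move=> A AV; exists A; rewrite // mem_comp_cc AV connect0.
have sub_s : {subset [::] ++ s <= Tcc} by move=> x xs; rewrite -s_Tcc inE.
split.
  move=> i /(run_first_entry Tcc_acyclic zero0 uniq_s sub_s) [v [vV viX _ vnot]].
  by exists v.
have [e _] := set0Pn _ TF_neq0.
have [u [uV _ unot]] :=
  run_zero_avoids_all Tcc_acyclic zero0 uniq_s sub_s (ends_cc1_Vcc ends T F e).
by exists u.
Qed.
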